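(* Let $\mathfrak h,\mathfrak n\in\mathrm{Mult}_\rho$, $\mathfrak n\ne\emptyset$, let $a$ be the smallest integer with $\mathfrak n[a]\ne\emptyset$, and suppose $\mathfrak n[a]$ is admissible to $\mathfrak h$. For an enumeration $\Delta_1,\dots,\Delta_k$ of the segments of $\mathfrak n[a]$, set $\mathfrak r_0=\mathfrak h$, $\mathfrak r_i=\mathfrak r(\{\Delta_i,\dots,\Delta_1\},\mathfrak h)$, and consider the multisegment $\{\Upsilon(\Delta_1,\mathfrak r_0),\Upsilon(\Delta_2,\mathfrak r_1),\dots,\Upsilon(\Delta_k,\mathfrak r_{k-1})\}$. This multisegment does not depend on the chosen enumeration of $\mathfrak n[a]$. (It is denoted $\mathfrak{fs}(\mathfrak n,\mathfrak h)$.)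
   Context: Segments: for integers $a\le b$, $[a,b]_\rho$ (think of the integer interval $\{a,\dots,b\}$), with $a(\Delta)=a$, $b(\Delta)=b$, and inclusion of segments as intervals. Two segments are linked if their union is a segment (an interval) and neither contains the other. A multisegment is a finite multiset of nonempty segments; $\mathrm{Mult}_\rho$ is the set of multisegments (including $\emptyset$); $+$ and $-$ denote multiset sum and difference (adding an empty segment does nothing). For $c\in\mathbb Z$, $\mathfrak m[c]$ is the submultisegment of segments $\Delta\in\mathfrak m$ with $a(\Delta)=c$. A sequence of segments $\Delta_1,\dots,\Delta_k$ is ascending if for $i<j$ either $\Delta_i,\Delta_j$ are unlinked or $a(\Delta_i)<a(\Delta_j)$. Write $[x,y]_\rho\prec^L[x',y']_\rho$ if $x<x'$, or $x=x'$ and $y<y'$. A segment $\Delta=[a,b]_\rho$ is admissible to $\mathfrak h$ if $\mathfrak h$ contains a segment $[a,c]_\rho$ with $c\ge b$. Removal process: for $\Delta=[a,b]_\rho$ admissible to $\mathfrak h$, let $\Delta_1=[a_1,b_1]_\rho$ be a shortest segment of $\mathfrak h$ with $a_1=a$ and $b_1\ge b$; recursively, let $\Delta_i=[a_i,b_i]_\rho$ be the $\prec^L$-minimal segment of $\mathfrak h$ with $a_{i-1}<a_i$ and $b\le b_i<b_{i-1}$, stopping when none exists; let $\Delta_1,\dots,\Delta_r$ be the segments obtained (the removal sequence for $(\Delta,\mathfrak h)$). Put $\Delta_i^{tr}=[a_{i+1},b_i]_\rho$ for $i<r$ and $\Delta_r^{tr}=[b+1,b_r]_\rho$ (possibly empty),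 and $\mathfrak r(\Delta,\mathfrak h)=\mathfrak h-\sum_i\Delta_i+\sum_i\Delta_i^{tr}$; also $\Upsilon(\Delta,\mathfrak h)=\Delta_1$. If $\Delta$ is not admissible to $\mathfrak h$, $\mathfrak r(\Delta,\mathfrak h)=\infty$ (a formal symbol), and $\mathfrak r(\Delta,\infty)=\infty$. For $\mathfrak m\in\mathrm{Mult}_\rho$ with segments in ascending order $\Delta_1,\dots,\Delta_k$, $\mathfrak r(\mathfrak m,\mathfrak h)=\mathfrak r(\Delta_k,\dots\mathfrak r(\Delta_1,\mathfrak h)\dots)$ (independent of the ascending order; $\mathfrak r(\emptyset,\mathfrak h)=\mathfrak h$), and $\mathfrak m$ is admissible to $\mathfrak h$ if $\mathfrak r(\mathfrak m,\mathfrak h)\ne\infty$. *)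

(* Segments [a,b]_rho are encoded by pairs (a,b) of integers;
   multisegments by finite lists of segments, considered up to permutation
   (perm_eq). The formal symbol "infinity" is encoded by [None]. *)
From mathcomp Require Import all_boot all_order all_algebra.
Set Implicit Arguments. Unset Strict Implicit. Unset Printing Implicit Defensive.
Import Order.TTheory GRing.Theory Num.Theory.
Local Open Scope ring_scope.

Definition seg := (int * int)%type.

Definition seg_ne (s : seg) : bool := s.1 <= s.2.

Definition is_mult (m : seq seg) : bool := all seg_ne m.

Definition mult_at (m : seq seg) (c : int) : seq seg := [seq s <- m | s.1 == c].

Definition precL (s t : seg) : bool := (s.1 < t.1) || ((s.1 == t.1) && (s.2 < t.2)).
Definition precLe (s t : seg) : bool := (s == t) || precL s t.

Definition minseg (l : seq seg) : option seg :=
  foldr (fun x acc => match acc with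
                      | None => Some x
                      | Some y => if precLe x y then Some x else Some y end) None l.

Definition admissible_seg (D : seg) (h : seq seg) : bool :=
  has (fun s => (s.1 == D.1) && (D.2 <= s.2)) h.

(* Delta_1: a shortest segment [a,b1] of h with b1 >= b *)
Definition first_removed (D : seg) (h : seq seg) : option seg :=
  minseg [seq s <- h | (s.1 == D.1) && (D.2 <= s.2)].

(* Delta_2, ..., Delta_r : recursion with fuel (b_i strictly decreases, so the
   chain consists of distinct members of h and fuel size h suffices) *)
Fixpoint rem_chain (fuel : nat) (h : seq seg) (b : int) (prev : seg) : seq seg :=
  match fuel with
  | 0%N => [::]
  | S n =>
    match minseg [seq s <- h | (prev.1 < s.1) && (b <= s.2) && (s.2 < prev.2)] with
    | None => [::]
    | Some d => d :: rem_chain n h b d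
    end
  end.

Definition removal_seq (D : seg) (h : seq seg) : option (seq seg) :=
  match first_removed D h with
  | None => None
  | Some d1 => Some (d1 :: rem_chain (size h) h D.2 d1)
  end.

Fixpoint truncs (b : int) (l : seq seg) : seq seg :=
  match l with
  | [::] => [::]
  | [:: d] => [seq s <- [:: (b + 1, d.2)] | seg_ne s]
  | d :: ((d' :: _) as l') => [seq s <- [:: (d'.1, d.2)] | seg_ne s] ++ truncs b l'
  end.

Definition mdiff (h ds : seq seg) : seq seg := foldl (fun acc d => rem d acc) h ds.

Definition rseg (D : seg) (h : seq seg) : option (seq seg) :=
  match removal_seq D h with
  | None => None
  | Some ds => Some (mdiff h ds ++ truncs D.2 ds)
  end.

Definition upsilon (D : seg) (h : option (seq seg)) : option seg :=
  match h with None => None | Some h' => first_removed D h' end.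

(* r(m, h): the segments of m are processed in <=^L order, which is an
   ascending order (strictly increasing starts, and segments with equal start
   are unlinked). *)
Definition rmult (m : seq seg) (h : seq seg) : option (seq seg) :=
  foldl (fun acc D => match acc with None => None | Some h' => rseg D h' end)
        (Some h) (sort precLe m).

Definition admissible_mult (m h : seq seg) : bool := rmult m h != None.

Definition fs_seq (l : seq seg) (h : seq seg) : seq (option seg) :=
  [seq upsilon (nth (0, 0) l i) (rmult (take i l) h) | i <- iota 0 (size l)].

From mathcomp Require Import all_boot all_order all_algebra zify.
Import Order.TTheory GRing.Theory Num.Theory.
Local Open Scope ring_scope.
Set Implicit Arguments. Unset Strict Implicit.

(* Let D = [a, b] with b >= a. Of the segments removed by r(D, h) only
   Upsilon(D, h) starts at a: the later ones start strictly after a, and so do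
   all truncations since b + 1 > a. Hence on h[a] the step r(D, -) just deletes
   the shortest [a, c] with c >= b, and two such deletions for segments with
   the same start commute. So every enumeration of n[a] leaves the same
   remainder of h[a], and the Upsilon's, being exactly the deleted segments,
   form the multiset h[a] minus that remainder. *)

Lemma precLe_trans s t u : precLe s t -> precLe t u -> precLe s u.
Proof. by case: s t u => [x1 y1] [x2 y2] [x3 y3]; rewrite /precLe /precL /= !xpair_eqE; lia. Qed.

Lemma precLe_total s t : precLe s t || precLe t s.
Proof. by case: s t => [x1 y1] [x2 y2]; rewrite /precLe /precL /= !xpair_eqE; lia. Qed.

Lemma precLe_anti s t : precLe s t -> precLe t s -> s = t.
Proof.
case: s t => [x1 y1] [x2 y2]; rewrite /precLe /precL /= !xpair_eqE => st ts.
by have [-> ->] : x1 = x2 /\ y1 = y2 by lia.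
Qed.

Lemma minseg_None l : minseg l = None -> l = [::].
Proof. by case: l => //= x l; case: (minseg l) => // y; case: ifP. Qed.

Lemma minseg_Some l d :
  minseg l = Some d -> d \in l /\ {in l, forall x, precLe d x}.
Proof.
elim: l d => //= x l IHl d.
case E: (minseg l) => [y|]; last first.
  move=> [<-]; rewrite (minseg_None E) mem_head; split=> // z /[!inE] /eqP->.
  by rewrite /precLe eqxx.
have [yl ymin] := IHl _ E.
case: ifP => xy [<-]; split; rewrite ?inE ?eqxx ?yl ?orbT //.
- move=> z /[!inE] /orP[/eqP->|zl]; first by rewrite /precLe eqxx.
  exact: precLe_trans xy (ymin _ zl).
- by move=> z /[!inE] /orP[/eqP->|]; [have := precLe_total x y; rewrite xy | apply: ymin].
Qed.

Lemma minseg_eq l d : d \in l -> {in l, forall x, precLe d x} -> minseg l = Some d.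
Proof.
move=> dl dmin; case E: (minseg l) => [m|]; last by rewrite (minseg_None E) in dl.
by have [ml mmin] := minseg_Some E; rewrite (precLe_anti (mmin _ dl) (dmin _ ml)).
Qed.

Section FirstRemoved.

Variable D : seg.

Definition admissible_in (E : seq seg) (s : seg) : Prop := [/\ s \in E, s.1 = D.1 & D.2 <= s.2].

Lemma first_removed_Some E d : first_removed D E = Some d ->
  admissible_in E d /\ forall s, admissible_in E s -> d.2 <= s.2.
Proof.
move=> /minseg_Some[]; rewrite mem_filter => /andP[/andP[/eqP d1 d2] dE] dmin.
split=> [|s [sE s1 s2]]; first by split.
have : precLe d s by apply: dmin; rewrite mem_filter sE s1 eqxx s2.
by move: d1 s1; case: d {d2 dE dmin} => x y; case: s {sE s2} => u v /= -> ->;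
  rewrite /precLe /precL /= !xpair_eqE; lia.
Qed.

Lemma first_removed_eq E d : admissible_in E d ->
  (forall s, admissible_in E s -> d.2 <= s.2) -> first_removed D E = Some d.
Proof.
move=> [dE d1 d2] dmin; apply: minseg_eq; first by rewrite mem_filter dE d1 eqxx d2.
move=> x; rewrite mem_filter => /andP[/andP[/eqP x1 x2] xE].
have := dmin _ (And3 xE x1 x2); move: d1 x1.
by case: d {dE d2 dmin} => u v; case: x {xE x2} => p q /= -> ->;
  rewrite /precLe /precL /= !xpair_eqE; lia.
Qed.

Lemma first_removed_None E :
  first_removed D E = None <-> forall s, s \in E -> s.1 = D.1 -> s.2 < D.2.
Proof.
split=> [/minseg_None none s sE s1 | small].
  rewrite ltNge; apply/negP => s2.
  have : s \in [seq s <- E | (s.1 == D.1) && (D.2 <= s.2)] by rewrite mem_filter sE s1 eqxx s2.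
  by rewrite none.
case F: (first_removed D E) => [d|] //; have [[dE d1 d2] _] := first_removed_Some F.
by have := small _ dE d1; rewrite ltNge d2.
Qed.

Lemma first_removed_mult_at h : first_removed D h = first_removed D (mult_at h D.1).
Proof.
rewrite /first_removed /mult_at -filter_predI; congr minseg.
by apply: eq_filter => s /=; case: (s.1 == D.1); rewrite /= ?andbT.
Qed.

End FirstRemoved.

Lemma filter_rem_out (T : eqType) (p : pred T) x s : ~~ p x -> filter p (rem x s) = filter p s.
Proof.
move=> npx; elim: s => //= y s IHs.
by case: (eqVneq y x) => [->|_] /=; rewrite ?(negbTE npx) ?IHs.
Qed.

Lemma filter_rem_in (T : eqType) (p : pred T) x s : p x -> filter p (rem x s) = rem x (filter p s).
Proof.
move=> px; elim: s => //= y s IHs.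
case: (eqVneq y x) => [->|yx] /=; first by rewrite px /= eqxx.
by case: ifP => //= _; rewrite (negbTE yx) IHs.
Qed.

Lemma remC (T : eqType) (x y : T) s : rem x (rem y s) = rem y (rem x s).
Proof.
elim: s => //= z s IHs.
case: (eqVneq z y) => [zy|zy]; case: (eqVneq z x) => [zx|zx] /=.
- by rewrite -zx -zy.
- by rewrite zy eqxx.
- by rewrite zx eqxx.
- by rewrite (negbTE zx) (negbTE zy) IHs.
Qed.

Section FoldlPerm.

Variables (T : eqType) (A : Type) (f : A -> T -> A) (P : pred T).
Hypothesis fC : {in P &, forall x y a, f (f a x) y = f (f a y) x}.

Lemma foldl_moveC x s a : P x -> all P s -> f (foldl f a s) x = foldl f (f a x) s.
Proof.
elim: s a => //= y s IHs a Px /andP[Py Ps].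
by rewrite IHs // fC.
Qed.

Lemma perm_foldl s1 s2 a : all P s1 -> perm_eq s1 s2 -> foldl f a s1 = foldl f a s2.
Proof.
elim: s1 s2 a => [|x s1 IHs] s2 a; first by move=> _ /perm_size; case: s2.
move=> Pxs1 s12; have xs2 : x \in s2 by rewrite -(perm_mem s12) mem_head.
move: Pxs1 (Pxs1); rewrite {1}(perm_all P s12) /= => + /andP[Px Ps1].
move: s12; case/splitPr: xs2 => s t s12; rewrite all_cat /= => /and3P[Ps _ Pt].
rewrite (IHs (s ++ t)) //; last first.
  by rewrite -(perm_cons x); apply: perm_trans s12 _; rewrite -cat1s perm_catCA.
by rewrite !foldl_cat /= foldl_moveC.
Qed.

End FoldlPerm.

Definition rem_upsilon (D : seg) (o : option (seq seg)) : option (seq seg) :=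
  if o is Some E then omap (fun d => rem d E) (first_removed D E) else None.

Definition rem_upsilons (o : option (seq seg)) (l : seq seg) : option (seq seg) :=
  foldl (fun o D => rem_upsilon D o) o l.

Lemma rem_upsilons_None l : rem_upsilons None l = None.
Proof. by elim: l. Qed.

Lemma rem_upsilonC_le (D1 D2 : seg) o : D1.1 = D2.1 -> D1.2 <= D2.2 ->
  rem_upsilon D2 (rem_upsilon D1 o) = rem_upsilon D1 (rem_upsilon D2 o).
Proof.
move=> eq1 le2; case: o => [E|] //=.
case F1: (first_removed D1 E) => [e|] /=; last first.
  have -> // : first_removed D2 E = None.
  apply/first_removed_None => s sE s1; rewrite -eq1 in s1.
  exact: lt_le_trans (proj1 (first_removed_None _ _) F1 s sE s1) le2.
have [[eE e1 e2] emin] := first_removed_Some F1.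
have [lt_eD2 | le_D2e] := ltP e.2 D2.2.
  have -> : first_removed D2 (rem e E) = first_removed D2 E.
    by rewrite /first_removed filter_rem_out // negb_and -ltNge lt_eD2 orbT.
  case F2: (first_removed D2 E) => [f|] //=.
  have [[fE f1 f2] _] := first_removed_Some F2.
  rewrite (@first_removed_eq D1 (rem f E) e) /=; first by rewrite remC.
    by split=> //; apply: rem_mem eE; apply: contraTneq lt_eD2 => ->; rewrite -leNgt.
  by move=> s [/mem_rem sE s1 s2]; apply: emin.
have F2 : first_removed D2 E = Some e.
  apply: first_removed_eq; first by split; rewrite // -eq1.
  by move=> s [sE s1 s2]; apply: emin; split=> //; [rewrite eq1 | exact: le_trans le2 s2].
rewrite F2 /= /first_removed; congr (omap _ (minseg _)).
apply: eq_in_filter => x /mem_rem xE; rewrite eq1; case: eqP => //= x1.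
apply/idP/idP => [/(le_trans le2) // | x2]; apply: le_trans le_D2e _.
by apply: emin; split; rewrite // eq1.
Qed.

Lemma rem_upsilonC (D1 D2 : seg) o : D1.1 = D2.1 ->
  rem_upsilon D2 (rem_upsilon D1 o) = rem_upsilon D1 (rem_upsilon D2 o).
Proof.
move=> eq1; have [le12 | /ltW le21] := leP D1.2 D2.2; first exact: rem_upsilonC_le.
by symmetry; apply: rem_upsilonC_le.
Qed.

Lemma perm_rem_upsilons (c : int) l1 l2 o : all (fun D : seg => D.1 == c) l1 ->
  perm_eq l1 l2 -> rem_upsilons o l1 = rem_upsilons o l2.
Proof.
apply: perm_foldl => D1 D2 /eqP eq1 /eqP eq2 o'.
by rewrite rem_upsilonC // eq1 eq2.
Qed.

Definition seg_at (a : int) : pred seg := fun D => (D.1 == a) && (a <= D.2).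

Lemma rem_chain_gt fuel h b p : all (fun d : seg => p.1 < d.1) (rem_chain fuel h b p).
Proof.
elim: fuel p => //= n IHn p.
case E: minseg => [d|] //=; have [+ _] := minseg_Some E.
rewrite mem_filter => /andP[/andP[/andP[pd _] _] _]; rewrite pd /=.
by apply: sub_all (IHn d) => x; apply: lt_trans.
Qed.

Lemma truncs_gt (a b : int) l : a <= b ->
  all (fun s : seg => a < s.1) (behead l) -> all (fun s : seg => a < s.1) (truncs b l).
Proof.
move=> le_ab; elim: l => // d [|d' l] IHl /=.
  by rewrite /seg_ne /=; case: ifP => //= _; rewrite andbT; lia.
move=> /andP[ad' al]; rewrite all_cat IHl ?andbT //=.
by case: ifP; rewrite //= ad'.
Qed.

Lemma mult_at_all_gt (a : int) l : all (fun s : seg => a < s.1) l -> mult_at l a = [::].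
Proof.
move=> gt; rewrite /mult_at -(filter_pred0 l); apply: eq_in_filter => x /(allP gt) /=.
by case: eqP => // ->; rewrite ltxx.
Qed.

Lemma mult_at_mdiff (a : int) h ds :
  all (fun s : seg => a < s.1) ds -> mult_at (mdiff h ds) a = mult_at h a.
Proof.
elim: ds h => // d ds IHds h /andP[ad gt].
by rewrite -[mdiff _ _]/(mdiff (rem d h) ds) IHds // /mult_at filter_rem_out // gt_eqF.
Qed.

Lemma mult_at_rseg (a : int) D h : seg_at a D ->
  omap (mult_at^~ a) (rseg D h) = rem_upsilon D (Some (mult_at h a)).
Proof.
move=> /andP[/eqP D1 aD2]; rewrite /rseg /removal_seq /= -D1 -first_removed_mult_at D1.
case F: (first_removed D h) => [d|] //; congr Some.
have [[_ d1 _] _] := first_removed_Some F; rewrite D1 in d1.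
have gt := rem_chain_gt (size h) h D.2 d; rewrite d1 in gt.
rewrite [mult_at _ a]filter_cat -!/(mult_at _ a) (mult_at_all_gt (truncs_gt aD2 _)) // cats0.
by rewrite -[mdiff _ _]/(mdiff (rem d h) _) mult_at_mdiff // /mult_at filter_rem_in // d1.
Qed.

Lemma mult_at_foldl_rseg (a : int) l o : all (seg_at a) l ->
  omap (mult_at^~ a)
    (foldl (fun acc D => match acc with None => None | Some h' => rseg D h' end) o l) =
  rem_upsilons (omap (mult_at^~ a) o) l.
Proof.
elim: l o => //= D l IHl [h|] /andP[aD al]; rewrite IHl //.
by rewrite mult_at_rseg.
Qed.

Lemma mult_at_rmult (a : int) m h : all (seg_at a) m ->
  omap (mult_at^~ a) (rmult m h) = rem_upsilons (Some (mult_at h a)) m.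
Proof.
move=> ma; rewrite /rmult mult_at_foldl_rseg ?all_sort //.
apply/esym/(@perm_rem_upsilons a); last by rewrite perm_sym perm_sort.
by apply: sub_all ma => D /andP[].
Qed.

Lemma upsilon_mult_at (a : int) D o : D.1 = a ->
  upsilon D o = upsilon D (omap (mult_at^~ a) o).
Proof. by case: o => //= h <-; rewrite -first_removed_mult_at. Qed.

Fixpoint upsilons (o : option (seq seg)) (l : seq seg) : seq (option seg) :=
  if l is D :: l' then upsilon D o :: upsilons (rem_upsilon D o) l' else [::].

Lemma upsilons_iota o l :
  [seq upsilon (nth (0, 0) l i) (rem_upsilons o (take i l)) | i <- iota 0 (size l)] =
  upsilons o l.
Proof.
elim: l o => //= D l IHl o; congr cons.
by rewrite -{1}[1%N]addn0 iotaDl -map_comp -IHl.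
Qed.

Lemma upsilons_Some E l F : rem_upsilons (Some E) l = Some F ->
  exists2 ds, upsilons (Some E) l = map Some ds & perm_eq E (ds ++ F).
Proof.
elim: l E => [|D l IHl] E /=; first by move=> [->]; exists [::].
case F1: (first_removed D E) => [d|] /=; last by rewrite rem_upsilons_None.
case/IHl => ds -> EF; exists (d :: ds) => //=.
have [[dE _ _] _] := first_removed_Some F1.
by apply: perm_trans (perm_to_rem dE) _; rewrite /= perm_cons.
Qed.

Lemma fs_seq_upsilons (a : int) l h : all (seg_at a) l ->
  fs_seq l h = upsilons (Some (mult_at h a)) l.
Proof.
move=> la; rewrite /fs_seq -upsilons_iota; apply/eq_in_map => i.
rewrite mem_iota add0n => /andP[_ il].
have /andP[/eqP D1 _] := allP la _ (mem_nth (0, 0) il).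
rewrite (upsilon_mult_at _ D1) mult_at_rmult //.
by apply/allP => D /mem_take; apply: (allP la).
Qed.

Lemma mult_at_seg_at n (a : int) : is_mult n -> all (seg_at a) (mult_at n a).
Proof.
move=> nn; apply/allP => D; rewrite mem_filter => /andP[/eqP D1 Dn].
by rewrite /seg_at D1 eqxx -{1}D1; apply: (allP nn).
Qed.

Theorem mainTheorem3 (h n : seq seg) (a : int) :
  is_mult h -> is_mult n -> n != [::] ->
  mult_at n a != [::] ->
  (forall s, s \in n -> a <= s.1) ->
  admissible_mult (mult_at n a) h ->
  forall l1 l2 : seq seg,
    perm_eq l1 (mult_at n a) -> perm_eq l2 (mult_at n a) ->
    perm_eq (fs_seq l1 h) (fs_seq l2 h).
Proof.
move=> _ nn _ _ _ adm l1 l2 l1n l2n.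
have na := mult_at_seg_at a nn.
have [F naF] : exists F, rem_upsilons (Some (mult_at h a)) (mult_at n a) = Some F.
  move: adm; rewrite /admissible_mult -(mult_at_rmult h na).
  by case: rmult => // h' _; exists (mult_at h' a).
have la l : perm_eq l (mult_at n a) -> all (seg_at a) l by move/perm_all->.
have lF l : perm_eq l (mult_at n a) -> rem_upsilons (Some (mult_at h a)) l = Some F.
  move=> ln; rewrite -naF; apply: (@perm_rem_upsilons a) (ln).
  by apply: sub_all (la _ ln) => D /andP[].
rewrite (fs_seq_upsilons h (la _ l1n)) (fs_seq_upsilons h (la _ l2n)).
have [ds1 -> hds1] := upsilons_Some (lF _ l1n).
have [ds2 -> hds2] := upsilons_Some (lF _ l2n).
by apply/perm_map; rewrite -(perm_cat2r F); apply: perm_trans hds2; rewrite perm_sym.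
Qed.
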